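(* Let $G$ be a group and let $\omega$ be a weight on $G$ which is not strongly non-amenable; let $\mathcal A=l^1(G,\omega)$. Let $\phi:\mathcal B(\mathcal A,c_0(G))\to c_0(G)$ be a bounded left $\mathcal A$-module homomorphism, and let $M\in\mathcal B(\mathcal A,c_0(G))'$ be defined by $\langle M,T\rangle=\langle\delta_{e_G},\phi(T)\rangle$. Then $M$ vanishes on every $T\in\mathcal B(\mathcal A,c_0(G))$ whose matrix $(\langle\delta_s,T(\delta_t)\rangle)_{(s,t)\in G\times G}$ lies in $c_0(G\times G)$.
   Context: Weight: $\omega:G\to(0,\infty)$, $\omega(st)\le\omega(s)\omega(t)$, $\omega(e_G)=1$; $\Omega(g,h)=\omega(gh)\omega(g)^{-1}\omega(h)^{-1}$; $l^1(G,\omega)$ is $l^1(G)$ with $\delta_g\star\delta_h=\Omega(g,h)\delta_{gh}$, dual $l^\infty(G)$ with $\langle f,\delta_g\rangle=f_g$. $c_0(G)$ is a left $\mathcal A$-module via $\langle a\cdot\mu,b\rangle=\mu(ba)$. $\mathcal B(\mathcal A,c_0(G))$ is a left $\mathcal A$-module via $(a\cdot T)(b)=T(ba)$. The weight is strongly non-amenable if for every $\epsilon>0$ the set $\{g:\omega(g)\omega(g^{-1})<\epsilon^{-1}\}$ is finite; so ''not strongly non-amenable'' means there is $K>0$ with $\{g:\omega(g)\omega(g^{-1})\le K\}$ infinite. *)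

From HB Require Import structures.
From mathcomp Require Import all_boot all_order all_algebra.
From mathcomp Require Import boolp classical_sets cardinality reals.
From mathcomp Require Import complex.

Set Implicit Arguments.
Unset Strict Implicit.
Unset Printing Implicit Defensive.

Import Order.TTheory GRing.Theory Num.Theory.
Local Open Scope ring_scope.
Local Open Scope classical_set_scope.
Local Open Scope complex_scope.

Record group_str (G : choiceType) := GroupStr {
  gmul : G -> G -> G;
  ginv : G -> G;
  gone : G;
  gmulA : forall x y z, gmul x (gmul y z) = gmul (gmul x y) z;
  gmul1 : forall x, gmul gone x = x;
  gmulV : forall x, gmul (ginv x) x = gone
}.

Section WeightedL1.
Variables (R : realType) (G : choiceType) (gs : group_str G).
Local Notation K := (complex R).
Local Notation "x * y" := (gmul gs x y) : gp_scope.
Local Notation "x ^-1" := (ginv gs x) : gp_scope.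
Local Notation e := (gone gs).
Declare Scope gp_scope.
Delimit Scope gp_scope with gp.

Definition is_weight (w : G -> R) : Prop :=
  [/\ (forall g, 0 < w g),
      (forall s t, w (s * t)%gp <= w s * w t) & w e = 1].

Definition strongly_non_amenable (w : G -> R) : Prop :=
  forall eps : R, 0 < eps -> finite_set [set g | w g * w (g^-1)%gp < eps^-1].

Definition Omega (w : G -> R) (g h : G) : R := w (g * h)%gp / (w g * w h).

Definition HasSum (I : choiceType) (f : I -> K) (s : K) : Prop :=
  forall eps : K, 0 < eps -> exists F0 : seq I, forall F : seq I,
    uniq F -> {subset F0 <= F} -> `| \sum_(x <- F) f x - s | < eps.

(* the sum (0 if f is not summable) *)
Definition sumG (I : choiceType) (f : I -> K) : K := xget 0 [set s | HasSum f s].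

Definition l1 (a : G -> K) : Prop :=
  exists B : K, forall F : seq G, uniq F -> \sum_(x <- F) `|a x| <= B.

Definition l1norm (a : G -> K) : K := sumG (fun g => `|a g|).

Definition c0 (I : choiceType) (f : I -> K) : Prop :=
  forall eps : K, 0 < eps -> finite_set [set i | eps <= `|f i|].

Definition delta (g : G) : G -> K := fun h => if h == g then 1 else 0.

(* product of l^1(G,omega): delta_g * delta_h = Omega(g,h) delta_{gh}, i.e.
   (b * a)(k) = sum_g b(g) a(g^-1 k) Omega(g, g^-1 k) *)
Definition conv (w : G -> R) (b a : G -> K) : G -> K :=
  fun k => sumG (fun g => b g * a (g^-1 * k)%gp * (Omega w g (g^-1 * k)%gp)%:C).

(* duality <f, b> = sum_g f(g) b(g), between l^oo(G) (containing c_0(G))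
   and l^1(G); in particular <f, delta_g> = f(g) *)
Definition pair (f b : G -> K) : K := sumG (fun g => f g * b g).

(* left A-module structure on c_0(G) : <a . mu, b> = mu(b * a); as an element
   of l^oo(G) = A', a . mu is determined by its values on the delta_g *)
Definition act_c0 (w : G -> R) (a mu : G -> K) : G -> K :=
  fun g => pair mu (conv w (delta g) a).

(* bounded operators A -> c_0(G), represented by functions on G -> K whose
   relevant behaviour is on l^1(G): linear on l^1, with values in c_0(G), and
   bounded: ||T a||_oo <= D ||a||_1 *)
Definition op_bound (T : (G -> K) -> (G -> K)) (D : K) : Prop :=
  forall a, l1 a -> forall s, `|T a s| <= D * l1norm a.

Definition is_bounded_op (T : (G -> K) -> (G -> K)) : Prop :=
  [/\ (forall a b, l1 a -> l1 b -> T (a \+ b) = T a \+ T b),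
      (forall (c : K) a, l1 a -> T (fun g => c * a g) = (fun g => c * T a g)),
      (forall a, l1 a -> c0 (T a)) &
      exists D : K, op_bound T D].

Definition act_B (w : G -> R) (a : G -> K) (T : (G -> K) -> (G -> K)) :
  (G -> K) -> (G -> K) := fun b => T (conv w b a).

Definition is_bounded_module_hom (w : G -> R)
    (phi : ((G -> K) -> (G -> K)) -> (G -> K)) : Prop :=
  [/\ (forall T, is_bounded_op T -> c0 (phi T)),
      (forall T S, is_bounded_op T -> is_bounded_op S ->
          phi (fun a => T a \+ S a) = phi T \+ phi S),
      (forall (c : K) T, is_bounded_op T ->
          phi (fun a g => c * T a g) = (fun g => c * phi T g)),
      (exists C : K, forall T D, is_bounded_op T -> 0 <= D -> op_bound T D ->
          forall g, `|phi T g| <= C * D) &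
      (forall a T, l1 a -> is_bounded_op T -> phi (act_B w a T) = act_c0 w a (phi T))].

Definition op_matrix (T : (G -> K) -> (G -> K)) : (G * G)%type -> K :=
  fun p => pair (T (delta p.2)) (delta p.1).

End WeightedL1.

(* Write E(s,t) for the matrix unit a |-> a(t) delta_s.  For operators from l^1(G) to
   c_0(G) the norm is the supremum of the matrix entries, so an operator with a c_0
   matrix is a norm limit of finite combinations of matrix units and it suffices to
   prove phi(E(s,t))(e) = 0.  A weight that is not strongly non-amenable lives on an
   infinite group, so there are distinct h_0, h_1, ... in G such that a quotient
   h_a h_b^-1 with a <> b determines max(a, b).  Let X be the row operator
   a |-> <rho, a> delta_s, where rho is Omega(t, t^-1 u)^-1 at the points u = t h_n
   and 0 elsewhere.  The module property gives phi(X)(h_k) = phi(delta_(h_k) . X)(e),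
   and delta_(h_k) . X is the row operator of a coefficient function equal to 1 at t
   whose value at any b <> t is nonzero for at most two k.  Averaging over k < N thus
   yields E(s,t) up to an operator of norm O(1/N), while the average of the
   phi(X)(h_k) tends to 0 because phi(X) lies in c_0(G) and the h_k are distinct. *)

From HB Require Import structures.
From mathcomp Require Import all_boot all_order all_algebra.
From mathcomp Require Import boolp classical_sets cardinality reals.
From mathcomp Require Import complex.
From mathcomp Require Import ring lra.
Import Order.TTheory GRing.Theory Num.Theory.
Import ComplexField.Normc.
Local Open Scope ring_scope.
Local Open Scope classical_set_scope.
Local Open Scope complex_scope.
Set Implicit Arguments.
Unset Strict Implicit.
Unset Printing Implicit Defensive.

Section ComplexNorm.
Variable R : rcfType.
Implicit Types (x y z : R[i]) (r : R).

Lemma normr_normc z : `|z| = (normc z)%:C.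
Proof. by case: z. Qed.

Lemma normc_ge0 z : 0 <= normc z.
Proof. by case: z => a b; exact: sqrtr_ge0. Qed.

Lemma normcD x y : normc (x + y) <= normc x + normc y.
Proof. exact: le_normcD. Qed.

Lemma normc_eq0 z : (normc z == 0) = (z == 0).
Proof. by apply/eqP/eqP => [/eq0_normc|->] //; exact: normc0. Qed.

Lemma normcB x y : normc (x - y) = normc (y - x).
Proof. by rewrite -normcN opprB. Qed.

Lemma normcR r : normc r%:C = `|r|.
Proof. by rewrite /normc /= expr0n /= addr0 sqrtr_sqr. Qed.

Lemma normc_sum (I : Type) (s : seq I) (f : I -> R[i]) :
  normc (\sum_(i <- s) f i) <= \sum_(i <- s) normc (f i).
Proof.
elim: s => [|i s IH]; first by rewrite !big_nil normc0.
by rewrite !big_cons; apply: le_trans (normcD _ _) _; rewrite lerD2l.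
Qed.

Lemma normc_Re z : `|complex.Re z| <= normc z.
Proof. by rewrite -lecR -normr_normc normc_ge_Re. Qed.

Lemma normc_Im z : `|complex.Im z| <= normc z.
Proof.
have := normc_Re (z * 'i); rewrite ReiNIm normrN normcM.
by rewrite [normc 'i]/normc /= expr0n /= expr1n add0r sqrtr1 mulr1.
Qed.

Lemma gt0_complexE z : 0 < z -> z = (complex.Re z)%:C /\ 0 < complex.Re z.
Proof. by case: z => a b; rewrite ltcE /= => /andP[/eqP -> ->]. Qed.

Lemma ge0_complexE z : 0 <= z -> z = (complex.Re z)%:C /\ 0 <= complex.Re z.
Proof. by case: z => a b; rewrite lecE /= => /andP[/eqP -> ->]. Qed.

End ComplexNorm.

Section UnorderedSums.
Variables (R : realType) (I : choiceType).
Local Notation K := (complex R).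
Implicit Types (f g : I -> K) (s t : K).

Lemma HasSumP f s :
  HasSum f s <-> forall eps : R, 0 < eps -> exists F0 : seq I, forall F : seq I,
    uniq F -> {subset F0 <= F} -> normc (\sum_(x <- F) f x - s) < eps.
Proof.
split=> Hs eps; [move=> eps_gt0 | move=> /gt0_complexE[-> eps_gt0]].
  have [|F0 HF0] := Hs eps%:C; first by rewrite ltcR.
  by exists F0 => F uF sF; rewrite -ltcR -normr_normc; apply: HF0.
have [F0 HF0] := Hs _ eps_gt0.
by exists F0 => F uF sF; rewrite normr_normc ltcR; apply: HF0.
Qed.

Lemma HasSum_unique f s t : HasSum f s -> HasSum f t -> s = t.
Proof.
move=> /HasSumP Hs /HasSumP Ht; apply/eqP; rewrite -subr_eq0 -normc_eq0.
rewrite eq_le normc_ge0 andbT leNgt; apply/negP => dst_gt0.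
have dst2_gt0 : 0 < normc (s - t) / 2 by rewrite divr_gt0.
have [F0 H0] := Hs _ dst2_gt0; have [F1 H1] := Ht _ dst2_gt0.
pose F := undup (F0 ++ F1).
have sub0 : {subset F0 <= F} by move=> x x0; rewrite mem_undup mem_cat x0.
have sub1 : {subset F1 <= F} by move=> x x1; rewrite mem_undup mem_cat x1 orbT.
have := H0 F (undup_uniq _) sub0; have := H1 F (undup_uniq _) sub1.
set S := \sum_(x <- F) f x => ltSt ltSs.
have : normc (s - t) <= normc (s - S) + normc (S - t).
  by have := normcD (s - S) (S - t); rewrite addrA subrK.
by rewrite leNgt (splitr (normc (s - t))) ltrD // normcB.
Qed.

Lemma sumG_eq f s : HasSum f s -> sumG f = s.
Proof. by move=> Hs; apply: xget_unique => // t /HasSum_unique; apply. Qed.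

Lemma HasSum_support1 f i : (forall x, x != i -> f x = 0) -> HasSum f (f i).
Proof.
move=> f0; apply/HasSumP => eps eps_gt0; exists [:: i] => F uF sF.
have iF : i \in F by apply: sF; rewrite inE.
rewrite (big_rem i iF) /= big1_seq ?addr0 ?subrr ?normc0 // => x /andP[_ xF].
by apply: f0; apply: contraTneq xF => ->; rewrite mem_rem_uniqF.
Qed.

Lemma HasSumD f g s t : HasSum f s -> HasSum g t -> HasSum (f \+ g) (s + t).
Proof.
move=> /HasSumP Hs /HasSumP Ht; apply/HasSumP => eps eps_gt0.
have eps2_gt0 : 0 < eps / 2 by rewrite divr_gt0.
have [F0 H0] := Hs _ eps2_gt0; have [F1 H1] := Ht _ eps2_gt0.
exists (F0 ++ F1) => F uF sF; rewrite big_split /= opprD addrACA (splitr eps).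
by apply: le_lt_trans (normcD _ _) _; apply: ltrD;
  [apply: H0 | apply: H1] => // x x01; apply: sF; rewrite mem_cat x01 ?orbT.
Qed.

Lemma HasSumZ f s (c : K) : HasSum f s -> HasSum (fun x => c * f x) (c * s).
Proof.
move=> /HasSumP Hs; apply/HasSumP => eps eps_gt0.
have c1_gt0 : 0 < normc c + 1 by rewrite ltr_wpDl ?normc_ge0.
have [F0 H0] := Hs (eps / (normc c + 1)) (divr_gt0 eps_gt0 c1_gt0).
exists F0 => F uF sF; rewrite -mulr_sumr -mulrBr normcM.
apply: le_lt_trans (ler_wpM2l (normc_ge0 c) (ltW (H0 F uF sF))) _.
by rewrite mulrA ltr_pdivrMr // mulrC ltr_pM2l // ltrDl.
Qed.

Lemma HasSum_reindex f s (e e' : I -> I) :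
  cancel e e' -> cancel e' e -> HasSum f s -> HasSum (f \o e) s.
Proof.
move=> ee' e'e /HasSumP Hs; apply/HasSumP => eps eps_gt0.
have [F0 H0] := Hs _ eps_gt0; exists (map e' F0) => F uF sF.
rewrite -(big_map e xpredT f); apply: H0; first by rewrite map_inj_uniq //; exact: can_inj ee'.
by move=> x x0; apply/mapP; exists (e' x); rewrite ?e'e //; apply/sF/map_f.
Qed.

Lemma sumG_reindex f (e e' : I -> I) :
  cancel e e' -> cancel e' e -> sumG (f \o e) = sumG f.
Proof.
move=> ee' e'e; congr xget; apply/seteqP; split=> s /= Hs; last first.
  exact: HasSum_reindex ee' e'e Hs.
by have := HasSum_reindex e'e ee' Hs; congr HasSum; apply/funext => x /=; rewrite e'e.
Qed.


Definition psums (b : I -> R) : set R :=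
  [set x | exists F : seq I, uniq F /\ x = \sum_(i <- F) b i].

Definition bounded_sums (b : I -> R) : Prop :=
  exists B : R, forall F : seq I, uniq F -> \sum_(i <- F) b i <= B.

Section NonNegative.
Variable b : I -> R.
Hypotheses (b_ge0 : forall x, 0 <= b x) (b_bounded : bounded_sums b).

Lemma has_sup_psums : has_sup (psums b).
Proof.
split; first by exists 0, [::]; rewrite big_nil.
by have [B HB] := b_bounded; exists B => _ [F [uF ->]]; apply: HB.
Qed.

Lemma sum_le_sup_psums F : uniq F -> \sum_(i <- F) b i <= sup (psums b).
Proof. by move=> uF; apply: sup_upper_bound; [exact: has_sup_psums | exists F]. Qed.

Lemma sum_le_sum_subset F0 F :
  uniq F0 -> uniq F -> {subset F0 <= F} -> \sum_(i <- F0) b i <= \sum_(i <- F) b i.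
Proof.
move=> uF0 uF sF; rewrite [leRHS](bigID (fun i => i \in F0)) /=.
have -> : \sum_(i <- F | i \in F0) b i = \sum_(i <- F0) b i.
  rewrite -big_filter; apply/perm_big/uniq_perm; rewrite ?filter_uniq // => x.
  by rewrite mem_filter andb_idr //; apply: sF.
by rewrite lerDl sumr_ge0.
Qed.

Lemma HasSum_ge0 : HasSum (fun x => (b x)%:C) (sup (psums b))%:C.
Proof.
apply/HasSumP => eps eps_gt0.
have [_ [F0 [uF0 ->]] lt_sup] := sup_adherent eps_gt0 has_sup_psums.
exists F0 => F uF sF; rewrite -rmorph_sum -rmorphB normcR.
rewrite ler0_norm ?subr_le0 ?sum_le_sup_psums // opprB ltrBlDr addrC -ltrBlDr.
exact: lt_le_trans lt_sup (sum_le_sum_subset uF0 uF sF).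
Qed.

End NonNegative.

Lemma bounded_sums_le (b c : I -> R) :
  (forall x, c x <= b x) -> bounded_sums b -> bounded_sums c.
Proof.
move=> cb [B HB]; exists B => F uF; apply: le_trans (HB F uF).
by apply: ler_sum => i _; apply: cb.
Qed.

Lemma bounded_sumsZ (b : I -> R) (k : R) :
  0 <= k -> bounded_sums b -> bounded_sums (fun x => k * b x).
Proof.
move=> k_ge0 [B HB]; exists (k * B) => F uF.
by rewrite -mulr_sumr ler_wpM2l // HB.
Qed.

Lemma HasSum_real_dom (r b : I -> R) :
  (forall x, `|r x| <= b x) -> bounded_sums b -> exists s, HasSum (fun x => (r x)%:C) s.
Proof.
move=> rb b_bounded.
pose pos x := (`|r x| + r x) / 2; pose neg x := (`|r x| - r x) / 2.
have [pos_ge0 neg_ge0 pos_le neg_le] :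
    [/\ forall x, 0 <= pos x, forall x, 0 <= neg x,
        forall x, pos x <= b x & forall x, neg x <= b x].
  by split=> x; have := rb x; have := ler_norml (r x) `|r x|;
    rewrite lexx /pos /neg => /esym/andP[? ?] ?; lra.
have Hpos := HasSum_ge0 pos_ge0 (bounded_sums_le pos_le b_bounded).
have Hneg := HasSumZ (-1) (HasSum_ge0 neg_ge0 (bounded_sums_le neg_le b_bounded)).
eexists; have := HasSumD Hpos Hneg; congr HasSum; apply/funext => x /=.
by rewrite mulN1r -rmorphB /pos /neg; congr (_%:C); lra.
Qed.

Lemma HasSum_dom f (b : I -> R) :
  (forall x, normc (f x) <= b x) -> bounded_sums b -> exists s, HasSum f s.
Proof.
move=> fb b_bounded.
have [s1 H1] := HasSum_real_dom (fun x => le_trans (normc_Re _) (fb x)) b_bounded.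
have [s2 H2] := HasSum_real_dom (fun x => le_trans (normc_Im _) (fb x)) b_bounded.
exists (s1 + 'i * s2); have := HasSumD H1 (HasSumZ 'i H2).
by congr HasSum; apply/funext => x /=; rewrite -complexE.
Qed.

Lemma normc_HasSum_le f (b : I -> R) s :
  (forall x, normc (f x) <= b x) -> bounded_sums b -> HasSum f s ->
  normc s <= sup (psums b).
Proof.
move=> fb b_bounded /HasSumP Hs; apply/ler_addgt0Pr => eps eps_gt0.
have [F0 H0] := Hs _ eps_gt0.
have sF0 : {subset F0 <= undup F0} by move=> x; rewrite mem_undup.
have := H0 _ (undup_uniq F0) sF0.
set S := \sum_(x <- _) f x => ltSs.
have S_le : normc S <= sup (psums b).
  apply: le_trans (normc_sum _ _) _.
  apply: le_trans _ (sum_le_sup_psums b_bounded (undup_uniq F0)).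
  by apply: ler_sum => i _.
have : normc s <= normc S + normc (s - S).
  by have := normcD S (s - S); rewrite addrC subrK.
by move/le_trans; apply; rewrite normcB lerD // ltW.
Qed.

End UnorderedSums.

Section L1.
Variables (R : realType) (G : choiceType).
Local Notation K := (complex R).
Implicit Types a b : G -> K.

Lemma l1P a : l1 a <-> bounded_sums (fun x => normc (a x)).
Proof.
have sumE F : \sum_(x <- F) `|a x| = (\sum_(x <- F) normc (a x))%:C.
  by rewrite rmorph_sum; apply: eq_bigr => x _; rewrite normr_normc.
split=> [[B HB] | [B HB]]; last by exists B%:C => F uF; rewrite sumE lecR HB.
exists (complex.Re B) => F uF; have := HB F uF.
by rewrite sumE lecE /= => /andP[].
Qed.

Definition l1n a : R := sup (psums (fun x => normc (a x))).

Lemma l1norm_l1n a : l1 a -> l1norm a = (l1n a)%:C.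
Proof.
move=> /l1P a_bounded; apply: sumG_eq.
have := HasSum_ge0 (fun x => normc_ge0 (a x)) a_bounded.
by congr HasSum; apply/funext => x; rewrite normr_normc.
Qed.

Lemma sum_le_l1n a F : l1 a -> uniq F -> \sum_(x <- F) normc (a x) <= l1n a.
Proof. by move=> /l1P la uF; have := sum_le_sup_psums la uF. Qed.

Lemma l1n_ge0 a : l1 a -> 0 <= l1n a.
Proof. by move=> la; have := sum_le_l1n la (isT : uniq ([::] : seq G)); rewrite big_nil. Qed.

Lemma l1n_le a (B : R) :
  (forall F, uniq F -> \sum_(x <- F) normc (a x) <= B) -> l1n a <= B.
Proof.
move=> HB; apply: ge_sup; first by exists 0, [::]; rewrite big_nil.
by move=> _ [F [uF ->]]; apply: HB.
Qed.

Lemma l1_le a b : l1 a -> (forall x, normc (b x) <= normc (a x)) -> l1 b.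
Proof. by move=> /l1P la ba; apply/l1P; apply: bounded_sums_le la. Qed.

Lemma l1Z (c : K) a : l1 a -> l1 (fun x => c * a x).
Proof.
move=> /l1P /(bounded_sumsZ (normc_ge0 c)) la; apply/l1P.
by apply: bounded_sums_le la => x; rewrite normcM.
Qed.

Lemma l1_delta (g : G) : l1 (delta R g).
Proof.
apply/l1P; exists 1 => F uF; have [gF|gF] := boolP (g \in F).
  rewrite (big_rem g gF) /= big1_seq ?addr0 => [|x /andP[_ xF]].
    by rewrite /delta eqxx normc1.
  by rewrite /delta ifN ?normc0 //; apply: contraTneq xF => ->; rewrite mem_rem_uniqF.
rewrite big1_seq ?ler01 // => x /andP[_ xF].
by rewrite /delta ifN ?normc0 //; apply: contraNneq gF => <-.
Qed.

Lemma HasSum_bounded_l1 (c a : G -> K) (B : R) :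
  0 <= B -> (forall x, normc (c x) <= B) -> l1 a ->
  exists s, HasSum (fun x => c x * a x) s.
Proof.
move=> B_ge0 cB /l1P la; apply: HasSum_dom (bounded_sumsZ B_ge0 la) => x.
by rewrite normcM ler_wpM2r ?normc_ge0.
Qed.

Lemma l1n_tail_le a (eta : R) : l1 a -> 0 < eta ->
  exists2 F : seq G, uniq F & l1n (fun x => if x \in F then 0 else a x) <= eta.
Proof.
move=> la eta_gt0; have a_bounded := (l1P a).1 la.
have [_ [F [uF ->]] lt_F] := sup_adherent eta_gt0 (has_sup_psums a_bounded).
exists F => //; apply: l1n_le => L uL.
rewrite (eq_bigr (fun x => if x \notin F then normc (a x) else 0)) => [|x _]; last first.
  by case: (x \in F); rewrite ?normc0.
rewrite -big_mkcond -big_filter.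
have : \sum_(x <- [seq x <- L | x \notin F]) normc (a x) + \sum_(x <- F) normc (a x) <= l1n a.
  rewrite -big_cat sum_le_l1n // cat_uniq filter_uniq // uF andbT /=.
  by apply/hasPn => x xF; rewrite mem_filter negb_and xF.
by rewrite -/(l1n a) in lt_F; lra.
Qed.

End L1.


Section GroupLaws.
Variables (G : choiceType) (gs : group_str G).
Local Notation mul := (gmul gs).
Local Notation inv := (ginv gs).
Local Notation e := (gone gs).

Lemma gmulxV x : mul x (inv x) = e.
Proof.
rewrite -[mul x _](gmul1 gs) -{1}(gmulV gs (inv x)) -gmulA [mul (inv x) (mul x _)]gmulA.
by rewrite gmulV gmul1 gmulV.
Qed.

Lemma gmulx1 x : mul x e = x.
Proof. by rewrite -(gmulV gs x) gmulA gmulxV gmul1. Qed.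

Lemma gmulKg x y : mul (inv x) (mul x y) = y.
Proof. by rewrite gmulA gmulV gmul1. Qed.

Lemma gmulKVg x y : mul x (mul (inv x) y) = y.
Proof. by rewrite gmulA gmulxV gmul1. Qed.

Lemma gmulgK x y : mul (mul x y) (inv y) = x.
Proof. by rewrite -gmulA gmulxV gmulx1. Qed.

Lemma gmulgKV x y : mul (mul x (inv y)) y = x.
Proof. by rewrite -gmulA gmulV gmulx1. Qed.

Lemma gmulI x : injective (mul x).
Proof. by move=> y z yz; rewrite -(gmulKg x y) yz gmulKg. Qed.

Lemma gmulIr x : injective (mul^~ x).
Proof. by move=> y z /= yz; rewrite -(gmulgK y x) yz gmulgK. Qed.

End GroupLaws.

Section WeightedConvolution.
Variables (R : realType) (G : choiceType) (gs : group_str G) (w : G -> R).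
Hypothesis w_weight : is_weight gs w.
Local Notation K := (complex R).
Local Notation mul := (gmul gs).
Local Notation inv := (ginv gs).
Local Notation e := (gone gs).

Lemma weight_gt0 x : 0 < w x.
Proof. by case: w_weight. Qed.

Lemma Omega_gt0 x y : 0 < Omega gs w x y.
Proof. by rewrite /Omega divr_gt0 ?mulr_gt0 ?weight_gt0. Qed.

Lemma Omega_le1 x y : Omega gs w x y <= 1.
Proof.
by case: w_weight => _ w_submul _; rewrite ler_pdivrMr ?mulr_gt0 ?weight_gt0 ?mul1r.
Qed.

Lemma Omega1g x : Omega gs w e x = 1.
Proof. by case: w_weight => w_gt0 _ w1; rewrite /Omega gmul1 w1 mul1r divff ?gt_eqF. Qed.

Lemma pair_delta (f : G -> K) g : pair f (delta R g) = f g.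
Proof.
have -> : f g = f g * delta R g g by rewrite /delta eqxx mulr1.
by apply: sumG_eq; apply: HasSum_support1 => x /negbTE xg; rewrite /delta xg mulr0.
Qed.

Lemma conv_delta_r (b : G -> K) h :
  conv gs w b (delta R h) = fun k => b (mul k (inv h)) * (Omega gs w (mul k (inv h)) h)%:C.
Proof.
apply/funext => k; rewrite /conv; set g := mul k (inv h).
have gk : mul (inv g) k = h by rewrite -[k](gmulgKV gs k h) gmulKg.
have -> : b g * (Omega gs w g h)%:C =
    b g * delta R h (mul (inv g) k) * (Omega gs w g (mul (inv g) k))%:C.
  by rewrite gk /delta eqxx mulr1.
apply: sumG_eq; apply: HasSum_support1 => x xg; rewrite /delta.
case: eqP => [xk|]; last by rewrite mulr0 mul0r.
by move: xg; rewrite /g -{1}[k](gmulKVg gs x) xk gmulgK eqxx.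
Qed.

Lemma act_c0_delta (mu : G -> K) h : act_c0 gs w (delta R h) mu e = mu h.
Proof.
rewrite /act_c0 conv_delta_r /pair.
have -> : mu h = mu h * (delta R e (mul h (inv h)) * (Omega gs w (mul h (inv h)) h)%:C).
  by rewrite gmulxV /delta eqxx Omega1g mul1r mulr1.
apply: sumG_eq; apply: HasSum_support1 => x xh; rewrite /delta.
case: eqP => [xe|]; last by rewrite mul0r mulr0.
by move/eqP: xh; rewrite -[x](gmulgKV gs x h) xe gmul1.
Qed.

End WeightedConvolution.

Section BoundedOperators.
Variables (R : realType) (G : choiceType).
Local Notation K := (complex R).
Local Notation op := ((G -> K) -> (G -> K)).

Lemma c0P (I : choiceType) (f : I -> K) :
  c0 f <-> forall eps : R, 0 < eps -> finite_set [set i | eps <= normc (f i)].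
Proof.
have setE (eps : R) : [set i | eps%:C <= `|f i|] = [set i | eps <= normc (f i)].
  by apply/seteqP; split=> x /=; rewrite normr_normc lecR.
split=> f0 eps; first by move=> eps_gt0; rewrite -setE; apply: f0; rewrite ltcR.
by move=> /gt0_complexE[-> eps_gt0]; rewrite setE; apply: f0.
Qed.

Lemma c0_seq (I : choiceType) (f : I -> K) (eps : R) : c0 f -> 0 < eps ->
  exists2 L : seq I, uniq L & forall i, (i \in L) = (eps <= normc (f i)).
Proof.
move=> /c0P f0 /f0 /finite_seqP[L LE]; exists (undup L); first exact: undup_uniq.
move=> i; rewrite mem_undup; apply/idP/idP => [iL|].
  by have : [set` L] i by []; rewrite -LE.
by move=> le_eps; have : [set i | eps <= normc (f i)] i by []; rewrite LE.
Qed.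

Lemma c0_support1 (f : G -> K) s : (forall x, x != s -> f x = 0) -> c0 f.
Proof.
move=> f0; apply/c0P => eps eps_gt0; apply: sub_finite_set (finite_seq [:: s]) => x /=.
rewrite inE; apply: contraTT => /f0->.
by rewrite normc0 -ltNge.
Qed.

Lemma c0D (f g : G -> K) : c0 f -> c0 g -> c0 (f \+ g).
Proof.
move=> /c0P f0 /c0P g0; apply/c0P => eps eps_gt0.
have eps2_gt0 : 0 < eps / 2 by rewrite divr_gt0.
have fin : finite_set ([set i | eps / 2 <= normc (f i)] `|` [set i | eps / 2 <= normc (g i)]).
  by rewrite finite_setU; split; [apply: f0 | apply: g0].
apply: sub_finite_set fin => x /= fgx; apply: contrapT => /not_orP[/negP + /negP].
by rewrite -!ltNge; have := normcD (f x) (g x); lra.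
Qed.

Lemma c0Z (c : K) (f : G -> K) : c0 f -> c0 (fun x => c * f x).
Proof.
move=> /c0P f0; apply/c0P => eps eps_gt0.
have c1_gt0 : 0 < normc c + 1 by rewrite ltr_wpDl ?normc_ge0.
apply: sub_finite_set (f0 _ (divr_gt0 eps_gt0 c1_gt0)) => x /= cfx.
rewrite ler_pdivrMr //; apply: le_trans cfx _.
by rewrite normcM mulrC ler_wpM2l ?normc_ge0 ?lerDl.
Qed.

Lemma op_boundE (U : op) (D : K) :
  op_bound U D -> forall a, l1 a -> forall s, normc (U a s) <= normc D * l1n a.
Proof.
move=> UD a la s; have := UD a la s; rewrite (l1norm_l1n la) normr_normc => le_Uas.
have /ger0_norm Dl1n : 0 <= D * (l1n a)%:C by apply: le_trans le_Uas; rewrite lecR normc_ge0.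
move: le_Uas; rewrite -Dl1n normrM !normr_normc normcR ger0_norm ?l1n_ge0 //.
by rewrite -rmorphM lecR.
Qed.

Lemma op_boundR (U : op) (d : R) :
  (forall a, l1 a -> forall s, normc (U a s) <= d * l1n a) -> op_bound U d%:C.
Proof. by move=> Ud a la s; rewrite (l1norm_l1n la) normr_normc -rmorphM lecR Ud. Qed.

Lemma bounded_opD (T S : op) :
  is_bounded_op T -> is_bounded_op S -> is_bounded_op (fun a => T a \+ S a).
Proof.
move=> [TD TZ Tc0 [DT TDT]] [SD SZ Sc0 [DS SDS]]; split.
- by move=> a b la lb; rewrite TD // SD //; apply/funext => x /=; rewrite addrACA.
- by move=> c a la; rewrite TZ // SZ //; apply/funext => x /=; rewrite mulrDr.
- by move=> a la; apply: c0D; [apply: Tc0 | apply: Sc0].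
- exists (DT + DS) => a la s /=; rewrite mulrDl.
  by apply: le_trans (ler_normD _ _) _; apply: lerD; [apply: TDT | apply: SDS].
Qed.

Lemma bounded_opZ (c : K) (T : op) :
  is_bounded_op T -> is_bounded_op (fun a g => c * T a g).
Proof.
move=> [TD TZ Tc0 [DT TDT]]; split.
- by move=> a b la lb; rewrite TD //; apply/funext => x /=; rewrite mulrDr.
- by move=> k a la; rewrite TZ //; apply/funext => x /=; rewrite mulrCA.
- by move=> a la; apply/c0Z/Tc0.
- exists (`|c| * DT) => a la s /=; rewrite normrM -mulrA.
  by apply: ler_wpM2l => //; apply: TDT.
Qed.

Lemma bounded_op0 : is_bounded_op (fun (_ : G -> K) (_ : G) => 0).
Proof.
split=> [a b _ _|c a _||]; do ?[by apply/funext => x /=; rewrite ?addr0 ?mulr0].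
  move=> a _; apply/c0P => eps eps_gt0; apply: sub_finite_set (finite_set0 G) => x.
  by rewrite /mkset normc0 leNgt eps_gt0.
by exists 0 => a _ s; rewrite normr0 mul0r.
Qed.

Lemma bounded_op_sum (I : Type) (r : seq I) (c : I -> K) (T : I -> op) :
  (forall i, is_bounded_op (T i)) ->
  is_bounded_op (fun a g => \sum_(i <- r) c i * T i a g).
Proof.
move=> Tb; elim: r => [|i r IH].
  by congr is_bounded_op: bounded_op0; do 2!apply/funext => ? /=; rewrite big_nil.
have -> : (fun a g => \sum_(j <- i :: r) c j * T j a g) =
    (fun a => (fun g => c i * T i a g) \+ (fun g => \sum_(j <- r) c j * T j a g)).
  by do 2!apply/funext => ? /=; rewrite big_cons.
exact/bounded_opD/IH/bounded_opZ.
Qed.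

Definition row_op (s : G) (c : G -> K) : op :=
  fun a g => if g == s then sumG (fun u => c u * a u) else 0.

Definition bounded_fun (c : G -> K) (B : R) := forall u, normc (c u) <= B.

Section RowOperator.
Variables (s : G) (c : G -> K) (B : R).
Hypotheses (B_ge0 : 0 <= B) (cB : bounded_fun c B).

Lemma sumG_bounded_l1D a b : l1 a -> l1 b ->
  sumG (fun u => c u * (a \+ b) u) = sumG (fun u => c u * a u) + sumG (fun u => c u * b u).
Proof.
move=> la lb; have [sa Ha] := HasSum_bounded_l1 B_ge0 cB la.
have [sb Hb] := HasSum_bounded_l1 B_ge0 cB lb.
rewrite (sumG_eq Ha) (sumG_eq Hb); apply: sumG_eq.
by have := HasSumD Ha Hb; congr HasSum; apply/funext => x /=; rewrite mulrDr.
Qed.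

Lemma sumG_bounded_l1Z (k : K) a : l1 a ->
  sumG (fun u => c u * (k * a u)) = k * sumG (fun u => c u * a u).
Proof.
move=> la; have [sa Ha] := HasSum_bounded_l1 B_ge0 cB la.
rewrite (sumG_eq Ha); apply: sumG_eq.
by have := HasSumZ k Ha; congr HasSum; apply/funext => x /=; rewrite mulrCA.
Qed.

Lemma normc_sumG_bounded_l1 a : l1 a -> normc (sumG (fun u => c u * a u)) <= B * l1n a.
Proof.
move=> la; have [sa Ha] := HasSum_bounded_l1 B_ge0 cB la; rewrite (sumG_eq Ha).
have Ba_bounded : bounded_sums (fun x => B * normc (a x)).
  by apply: bounded_sumsZ => //; apply/l1P.
apply: le_trans (normc_HasSum_le _ Ba_bounded Ha) _.
  by move=> x; rewrite normcM ler_wpM2r ?normc_ge0.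
apply: ge_sup; first by exists 0, [::]; rewrite big_nil.
by move=> _ [F [uF ->]]; rewrite -mulr_sumr ler_wpM2l // sum_le_l1n.
Qed.

Lemma op_bound_row_op : op_bound (row_op s c) B%:C.
Proof.
apply: op_boundR => a la g; rewrite /row_op; case: (g == s).
  exact: normc_sumG_bounded_l1.
by rewrite normc0 mulr_ge0 ?l1n_ge0.
Qed.

Lemma bounded_op_row_op : is_bounded_op (row_op s c).
Proof.
split; last by exists B%:C; apply: op_bound_row_op.
- move=> a b la lb; apply/funext => g; rewrite /row_op /=.
  by case: (g == s); rewrite ?addr0 ?sumG_bounded_l1D.
- move=> k a la; apply/funext => g; rewrite /row_op.
  by case: (g == s); rewrite ?mulr0 ?sumG_bounded_l1Z.
- by move=> a la; apply: (@c0_support1 _ s) => x xs; rewrite /row_op (negbTE xs).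
Qed.

End RowOperator.

Lemma bounded_fun_delta t : bounded_fun (delta R t) 1.
Proof. by move=> u; rewrite /delta; case: (u == t); rewrite ?normc1 ?normc0. Qed.

Definition matrix_unit (s t : G) : op := row_op s (delta R t).

Lemma matrix_unitE s t a g : matrix_unit s t a g = if g == s then a t else 0.
Proof.
rewrite /matrix_unit /row_op; case: (g == s) => //.
have -> : a t = delta R t t * a t by rewrite /delta eqxx mul1r.
apply: sumG_eq.
by apply: HasSum_support1 => x /negbTE xt; rewrite /delta xt mul0r.
Qed.

Lemma bounded_op_matrix_unit s t : is_bounded_op (matrix_unit s t).
Proof. exact: bounded_op_row_op ler01 (bounded_fun_delta t). Qed.

Lemma bounded_op_restrict (U : op) (a : G -> K) (F : seq G) s :
  is_bounded_op U -> l1 a -> uniq F ->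
  U (fun x => if x \in F then a x else 0) s = \sum_(t <- F) a t * U (delta R t) s.
Proof.
case=> UD UZ _ _ la; elim: F => [_|t F IH /andP[tF uF]].
  rewrite big_nil (_ : (fun x => _) = (fun x => 0 * delta R s x)).
    by rewrite UZ ?mul0r //; apply: l1_delta.
  by apply/funext => x; rewrite mul0r.
have laF : l1 (fun x => if x \in F then a x else 0).
  by apply: (l1_le la) => x; case: (x \in F); rewrite ?normc0 ?normc_ge0.
rewrite big_cons -IH // (_ : (fun x => _) = (fun x => a t * delta R t x) \+
    (fun x => if x \in F then a x else 0)).
  rewrite UD //=; last exact/l1Z/l1_delta.
  by rewrite UZ //; apply: l1_delta.
apply/funext => x /=; rewrite in_cons /delta; case: (eqVneq x t) => [->|_] /=.
  by rewrite (negbTE tF) mulr1 addr0.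
by rewrite mulr0 add0r.
Qed.

Lemma op_bound_entries (U : op) (eps : R) :
  is_bounded_op U -> 0 <= eps -> (forall s t, normc (U (delta R t) s) <= eps) ->
  op_bound U eps%:C.
Proof.
move=> Ub eps_ge0 Ueps; have [UD _ _ [D UDb]] := Ub.
apply: op_boundR => a la s; apply/ler_addgt0Pr => eta eta_gt0.
have D1_gt0 : 0 < normc D + 1 by rewrite ltr_wpDl ?normc_ge0.
have [F uF tail_le] := l1n_tail_le la (divr_gt0 eta_gt0 D1_gt0).
pose aF x := if x \in F then a x else 0; pose ar x := if x \in F then 0 else a x.
have laF : l1 aF by apply: (l1_le la) => x; rewrite /aF; case: (x \in F); rewrite ?normc0 ?normc_ge0.
have lar : l1 ar by apply: (l1_le la) => x; rewrite /ar; case: (x \in F); rewrite ?normc0 ?normc_ge0.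
have aE : a = aF \+ ar by apply/funext => x; rewrite /aF /ar /=; case: (x \in F); rewrite ?addr0 ?add0r.
rewrite {1}aE UD //=; apply: le_trans (normcD _ _) (lerD _ _).
  rewrite bounded_op_restrict //; apply: le_trans (normc_sum _ _) _.
  apply: le_trans (_ : \sum_(t <- F) normc (a t) * eps <= _).
    by apply: ler_sum => t _; rewrite normcM ler_wpM2l ?normc_ge0.
  by rewrite -mulr_suml mulrC; apply: ler_wpM2l => //; apply: sum_le_l1n.
apply: le_trans (op_boundE UDb lar s) _.
apply: le_trans (ler_wpM2l (normc_ge0 D) tail_le) _.
by rewrite mulrA ler_pdivrMr // mulrDr mulr1 [eta * _]mulrC lerDl ltW.
Qed.

Definition matrix_trunc (T : op) (L : seq (G * G)) : op :=
  fun a g => \sum_(p <- L) op_matrix T p * matrix_unit p.1 p.2 a g.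

Lemma bounded_op_matrix_trunc (T : op) L : is_bounded_op (matrix_trunc T L).
Proof. by apply: bounded_op_sum => p; apply: bounded_op_matrix_unit. Qed.

Lemma matrix_unit_delta (s t s' t' : G) :
  matrix_unit s t (delta R t') s' = ((s', t') == (s, t))%:R.
Proof. by rewrite matrix_unitE /delta xpair_eqE [t == t']eq_sym; case: (s' == s); case: (t' == t). Qed.

Lemma matrix_trunc_residual (T : op) L (s t : G) : uniq L ->
  T (delta R t) s - matrix_trunc T L (delta R t) s =
  if (s, t) \in L then 0 else T (delta R t) s.
Proof.
move=> uL; rewrite /matrix_trunc.
under eq_bigr => p _ do rewrite matrix_unit_delta -surjective_pairing.
have [stL|stL] := ifPn; last first.
  rewrite big1_seq ?subr0 // => p /andP[_ pL].
  by case: eqP => [stp|]; rewrite ?mulr0 //; move: stL; rewrite stp pL.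
rewrite (big_rem _ stL) /= eqxx mulr1 big1_seq ?addr0 => [|p /andP[_ pL]].
  by rewrite /op_matrix pair_delta subrr.
by case: eqP => [stp|]; rewrite ?mulr0 //; move: pL; rewrite -stp mem_rem_uniqF.
Qed.

Lemma op_bound_matrix_residual (T : op) L (d : R) :
  is_bounded_op T -> uniq L -> 0 <= d ->
  (forall p, p \notin L -> normc (op_matrix T p) <= d) ->
  op_bound (fun a => T a \+ (fun g => -1 * matrix_trunc T L a g)) d%:C.
Proof.
move=> Tb uL d_ge0 Td.
have Ub := bounded_opD Tb (bounded_opZ (-1) (bounded_op_matrix_trunc T L)).
apply: (op_bound_entries Ub d_ge0) => s t /=; rewrite mulN1r matrix_trunc_residual //.
case: ifPn => [_|stL]; first by rewrite normc0.
by have := Td _ stL; rewrite /op_matrix pair_delta.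
Qed.

End BoundedOperators.

Section RowOperatorCoefficients.
Variables (R : realType) (G : choiceType).
Local Notation K := (complex R).

Definition bounded_coef (c : G -> K) := exists2 B, 0 <= B & bounded_fun c B.

Lemma bounded_coefD c1 c2 : bounded_coef c1 -> bounded_coef c2 -> bounded_coef (c1 \+ c2).
Proof.
move=> [B1 B1_ge0 c1B] [B2 B2_ge0 c2B]; exists (B1 + B2); first exact: addr_ge0.
by move=> u; apply: le_trans (normcD _ _) (lerD (c1B u) (c2B u)).
Qed.

Lemma bounded_coefZ (k : K) c : bounded_coef c -> bounded_coef (fun u => k * c u).
Proof.
move=> [B B_ge0 cB]; exists (normc k * B); first by rewrite mulr_ge0 ?normc_ge0.
by move=> u; rewrite normcM ler_wpM2l ?normc_ge0.
Qed.

Lemma bounded_coef_sum (I : Type) (r : seq I) (k : I -> K) (c : I -> G -> K) :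
  (forall i, bounded_coef (c i)) -> bounded_coef (fun u => \sum_(i <- r) k i * c i u).
Proof.
move=> cb; elim: r => [|i r IH]; first by exists 0 => // u; rewrite big_nil normc0.
have := bounded_coefD (bounded_coefZ (k i) (cb i)) IH.
by congr bounded_coef; apply/funext => u /=; rewrite big_cons.
Qed.

Lemma bounded_coef_delta t : bounded_coef (delta R t).
Proof. by exists 1; [exact: ler01 | exact: bounded_fun_delta]. Qed.

Lemma bounded_op_row_op_coef s c : bounded_coef c -> is_bounded_op (row_op s c).
Proof. by case=> B B_ge0 cB; apply: bounded_op_row_op B_ge0 cB. Qed.

Lemma row_op_coefD s c1 c2 a : bounded_coef c1 -> bounded_coef c2 -> l1 a ->
  row_op s (c1 \+ c2) a = row_op s c1 a \+ row_op s c2 a.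
Proof.
move=> [B1 B1_ge0 c1B] [B2 B2_ge0 c2B] la; apply/funext => g; rewrite /row_op /=.
case: (g == s); last by rewrite addr0.
have [x1 H1] := HasSum_bounded_l1 B1_ge0 c1B la.
have [x2 H2] := HasSum_bounded_l1 B2_ge0 c2B la.
rewrite (sumG_eq H1) (sumG_eq H2); apply: sumG_eq.
by have := HasSumD H1 H2; congr HasSum; apply/funext => x /=; rewrite mulrDl.
Qed.

Lemma row_op_coefZ s (k : K) c a : bounded_coef c -> l1 a ->
  row_op s (fun u => k * c u) a = fun g => k * row_op s c a g.
Proof.
move=> [B B_ge0 cB] la; apply/funext => g; rewrite /row_op.
case: (g == s); last by rewrite mulr0.
have [x Hx] := HasSum_bounded_l1 B_ge0 cB la; rewrite (sumG_eq Hx); apply: sumG_eq.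
by have := HasSumZ k Hx; congr HasSum; apply/funext => u /=; rewrite mulrA.
Qed.

End RowOperatorCoefficients.


Section ModuleHomomorphism.
Variables (R : realType) (G : choiceType) (gs : group_str G) (w : G -> R).
Variable phi : ((G -> complex R) -> (G -> complex R)) -> (G -> complex R).
Hypothesis phi_hom : is_bounded_module_hom gs w phi.
Local Notation K := (complex R).
Local Notation op := ((G -> K) -> (G -> K)).

Lemma phiD (T S : op) :
  is_bounded_op T -> is_bounded_op S -> phi (fun a => T a \+ S a) = phi T \+ phi S.
Proof. by case: phi_hom => _ + _ _ _; apply. Qed.

Lemma phiZ (c : K) (T : op) :
  is_bounded_op T -> phi (fun a g => c * T a g) = (fun g => c * phi T g).
Proof. by case: phi_hom => _ _ + _ _; apply. Qed.

Lemma phi_c0 (T : op) : is_bounded_op T -> c0 (phi T).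
Proof. by case: phi_hom => + _ _ _ _; apply. Qed.

Lemma phi_bound : exists2 C : R, 0 <= C & forall (T : op) (d : R),
  is_bounded_op T -> 0 <= d -> op_bound T d%:C -> forall g, normc (phi T g) <= C * d.
Proof.
case: phi_hom => _ _ _ [C phiC] _.
have zero_bound : op_bound (fun (_ : G -> K) (_ : G) => 0) 1.
  by move=> a la s; rewrite normr0 (l1norm_l1n la) mul1r lecR l1n_ge0.
have /ge0_complexE[CE C_ge0] : 0 <= C.
  have := phiC _ _ (bounded_op0 _ _) ler01 zero_bound (gone gs).
  by rewrite mulr1; apply: le_trans.
exists (complex.Re C) => // T d Tb d_ge0 Td g.
by rewrite -lecR -normr_normc rmorphM /= -CE phiC ?lecR.
Qed.

Lemma phi_ext (T1 T2 : op) :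
  is_bounded_op T1 -> is_bounded_op T2 -> (forall a, l1 a -> T1 a = T2 a) ->
  phi T1 = phi T2.
Proof.
move=> T1b T2b T12; have [C _ phiC] := phi_bound.
have T2Nb := bounded_opZ (-1) T2b; have diffb := bounded_opD T1b T2Nb.
have diff0 : op_bound (fun a => T1 a \+ (fun g => -1 * T2 a g)) 0%:C.
  by apply: op_boundR => a la s /=; rewrite T12 // mulN1r subrr normc0 mul0r.
apply/funext => g; apply/eqP; rewrite -subr_eq0 -normc_eq0 eq_le normc_ge0 andbT.
by have := phiC _ _ diffb (lexx 0) diff0 g; rewrite phiD // phiZ //= mulN1r mulr0.
Qed.

Lemma phi_sum (I : Type) (r : seq I) (c : I -> K) (T : I -> op) :
  (forall i, is_bounded_op (T i)) ->
  phi (fun a g => \sum_(i <- r) c i * T i a g) = fun g => \sum_(i <- r) c i * phi (T i) g.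
Proof.
move=> Tb; elim: r => [|i r IH].
  have -> : (fun a g => \sum_(i <- [::]) c i * T i a g) =
      (fun a g => 0 * (fun (_ : G -> K) (_ : G) => 0 : K) a g).
    by apply/funext => a; apply/funext => g; rewrite big_nil mul0r.
  by rewrite (phiZ 0 (@bounded_op0 R G)); apply/funext => g; rewrite big_nil mul0r.
have -> : (fun a g => \sum_(j <- i :: r) c j * T j a g) =
    (fun a => (fun g => c i * T i a g) \+ (fun g => \sum_(j <- r) c j * T j a g)).
  by do 2!apply/funext => ? /=; rewrite big_cons.
rewrite (phiD (bounded_opZ (c i) (Tb i)) (bounded_op_sum r c Tb)) (phiZ _ (Tb i)) IH.
by apply/funext => g /=; rewrite big_cons.
Qed.

Hypothesis w_weight : is_weight gs w.

Lemma phi_act_delta (X : op) h :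
  is_bounded_op X -> phi (act_B gs w (delta R h) X) (gone gs) = phi X h.
Proof.
case: phi_hom => _ _ _ _ phi_act Xb.
by rewrite (phi_act _ _ (l1_delta R h) Xb) (act_c0_delta w_weight).
Qed.

End ModuleHomomorphism.

Section RowOperatorImages.
Variables (R : realType) (G : choiceType) (gs : group_str G) (w : G -> R).
Variable phi : ((G -> complex R) -> (G -> complex R)) -> (G -> complex R).
Hypothesis phi_hom : is_bounded_module_hom gs w phi.
Variable s : G.
Local Notation K := (complex R).
Local Notation mul := (gmul gs).
Local Notation inv := (ginv gs).

Lemma phi_row_opD c1 c2 : bounded_coef c1 -> bounded_coef c2 ->
  phi (row_op s (c1 \+ c2)) = phi (row_op s c1) \+ phi (row_op s c2).
Proof.
move=> c1b c2b; have r1 := bounded_op_row_op_coef s c1b.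
have r2 := bounded_op_row_op_coef s c2b.
rewrite -(phiD phi_hom r1 r2); apply: (phi_ext phi_hom) => //; last by move=> a la; apply: row_op_coefD.
  by apply: bounded_op_row_op_coef; apply: bounded_coefD.
exact: bounded_opD.
Qed.

Lemma phi_row_opZ (k : K) c : bounded_coef c ->
  phi (row_op s (fun u => k * c u)) = fun g => k * phi (row_op s c) g.
Proof.
move=> cb; have rc := bounded_op_row_op_coef s cb.
rewrite -(phiZ phi_hom k rc); apply: (phi_ext phi_hom) => //; last by move=> a la; apply: row_op_coefZ.
  by apply: bounded_op_row_op_coef; apply: bounded_coefZ.
exact: bounded_opZ.
Qed.

Lemma phi_row_op_sum (I : Type) (r : seq I) (k : I -> K) (c : I -> G -> K) :
  (forall i, bounded_coef (c i)) ->
  phi (row_op s (fun u => \sum_(i <- r) k i * c i u)) =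
  fun g => \sum_(i <- r) k i * phi (row_op s (c i)) g.
Proof.
move=> cb; elim: r => [|i r IH].
  have zero_coef : bounded_coef (fun _ : G => 0 : K) by exists 0 => // u; rewrite normc0.
  have -> : (fun u => \sum_(i <- [::]) k i * c i u) = (fun u => 0 * (fun=> 0 : K) u).
    by apply/funext => u; rewrite big_nil mul0r.
  by rewrite phi_row_opZ //; apply/funext => g; rewrite big_nil mul0r.
have sum_coef := bounded_coef_sum r k cb.
rewrite (_ : (fun u => _) = (fun u => k i * c i u) \+ (fun u => \sum_(j <- r) k j * c j u)).
  rewrite phi_row_opD ?phi_row_opZ ?IH //; last exact: bounded_coefZ.
  by apply/funext => g /=; rewrite big_cons.
by apply/funext => u /=; rewrite big_cons.
Qed.

Lemma act_delta_row_op c g :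
  act_B gs w (delta R g) (row_op s c) =
  row_op s (fun b => c (mul b g) * (Omega gs w b g)%:C).
Proof.
apply/funext => a; apply/funext => k; rewrite /act_B /row_op.
case: (k == s) => //; rewrite conv_delta_r.
have Kg : cancel (mul^~ g) (mul^~ (inv g)) by move=> x; apply: gmulgK.
have Kg' : cancel (mul^~ (inv g)) (mul^~ g) by move=> x; apply: gmulgKV.
rewrite -(sumG_reindex _ Kg Kg'); congr sumG; apply/funext => b /=.
by rewrite gmulgK -mulrA [a b * _]mulrC.
Qed.

Hypothesis w_weight : is_weight gs w.

Lemma phi_row_op_shift c g : bounded_coef c ->
  phi (row_op s (fun b => c (mul b g) * (Omega gs w b g)%:C)) (gone gs) =
  phi (row_op s c) g.
Proof.
move=> cb; rewrite -act_delta_row_op (phi_act_delta phi_hom w_weight) //.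
exact: bounded_op_row_op_coef.
Qed.

End RowOperatorImages.

Lemma not_strongly_non_amenable_infinite (R : realType) (G : choiceType)
    (gs : group_str G) (w : G -> R) :
  ~ strongly_non_amenable gs w -> forall L : seq G, exists x, x \notin L.
Proof.
move=> not_sna L; apply: contrapT => L_full; apply: not_sna => eps _.
apply: sub_finite_set (finite_seq L) => x _ /=.
by apply: contrapT => xL; apply: L_full; exists x; apply/negP.
Qed.

Section SeparatingSequence.
Variables (G : choiceType) (gs : group_str G).
Hypothesis G_infinite : forall L : seq G, exists x, x \notin L.
Local Notation mul := (gmul gs).
Local Notation inv := (ginv gs).

(* The next term avoids d l and d^-1 l for every quotient d = a b^-1 and every l
   among the previous terms; hence a quotient of two distinct terms determines
   the larger of their indices (sep_quotient_max). *)
Definition sep_forbidden (L : seq G) : seq G :=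
  let Q := [seq mul a (inv b) | a <- L, b <- L] in
  [seq mul d l | d <- Q, l <- L] ++ [seq mul (inv d) l | d <- Q, l <- L].

Definition sep_next (L : seq G) : G := xchoose (G_infinite (sep_forbidden L)).

Fixpoint sep_prefix (n : nat) : seq G :=
  if n is n'.+1 then rcons (sep_prefix n') (sep_next (sep_prefix n')) else [::].

Definition sep (n : nat) : G := sep_next (sep_prefix n).

Lemma sep_prefixE n : sep_prefix n = map sep (iota 0 n).
Proof.
elim: n => // n IH.
change (sep_prefix n.+1) with (rcons (sep_prefix n) (sep n)).
by rewrite -addn1 iotaD map_cat add0n /= cats1 -IH.
Qed.

Lemma mem_sep_prefix i n : (i < n)%N -> sep i \in sep_prefix n.
Proof. by move=> lt_in; rewrite sep_prefixE map_f // mem_iota. Qed.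

Lemma sep_not_forbidden n : sep n \notin sep_forbidden (sep_prefix n).
Proof. exact: xchooseP (G_infinite _). Qed.

Lemma sep_neq_quotient n a b l : (a < n)%N -> (b < n)%N -> (l < n)%N ->
  sep n != mul (mul (sep a) (inv (sep b))) (sep l) /\
  sep n != mul (inv (mul (sep a) (inv (sep b)))) (sep l).
Proof.
move=> lt_an lt_bn lt_ln.
have Q_mem : mul (sep a) (inv (sep b)) \in
    [seq mul x (inv y) | x <- sep_prefix n, y <- sep_prefix n].
  by apply/allpairsP; exists (sep a, sep b); split; rewrite ?mem_sep_prefix.
have l_mem := mem_sep_prefix lt_ln.
have := sep_not_forbidden n; rewrite mem_cat negb_or => /andP[not1 not2].
split; [apply: contraNneq not1 | apply: contraNneq not2] => ->;
  by apply/allpairsP; exists (mul (sep a) (inv (sep b)), sep l).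
Qed.

Lemma sep_inj : injective sep.
Proof.
suff sep_neq i n : (i < n)%N -> sep n != sep i.
  move=> i j eq_ij; case: (ltngtP i j) => // lt_ij.
    by have := sep_neq _ _ lt_ij; rewrite eq_ij eqxx.
  by have := sep_neq _ _ lt_ij; rewrite eq_ij eqxx.
move=> lt_in; have [+ _] := sep_neq_quotient lt_in lt_in lt_in.
by rewrite gmulxV gmul1.
Qed.

Lemma sep_quotient_max_le a b c d : a != b ->
  mul (sep a) (inv (sep b)) = mul (sep c) (inv (sep d)) -> (maxn a b <= maxn c d)%N.
Proof.
move=> neq_ab eq_q; rewrite leqNgt; apply/negP => lt_max.
have lt_c : (c < maxn a b)%N by apply: leq_ltn_trans lt_max; apply: leq_maxl.
have lt_d : (d < maxn a b)%N by apply: leq_ltn_trans lt_max; apply: leq_maxr.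
case: (ltngtP a b) neq_ab => // lt_ab _.
- move: lt_c lt_d; rewrite (maxn_idPr (ltnW lt_ab)) => lt_c lt_d.
  have [_] := sep_neq_quotient lt_c lt_d lt_ab; rewrite -eq_q.
  by rewrite -{2}(gmulgKV gs (sep a) (sep b)) gmulKg eqxx.
- move: lt_c lt_d; rewrite (maxn_idPl (ltnW lt_ab)) => lt_c lt_d.
  have [] := sep_neq_quotient lt_c lt_d lt_ab; rewrite -eq_q.
  by rewrite gmulgKV eqxx.
Qed.

Lemma sep_quotient_max a b c d : a != b -> c != d ->
  mul (sep a) (inv (sep b)) = mul (sep c) (inv (sep d)) -> maxn a b = maxn c d.
Proof.
move=> neq_ab neq_cd eq_q; apply/eqP; rewrite eqn_leq.
by rewrite (sep_quotient_max_le neq_ab eq_q) (sep_quotient_max_le neq_cd (esym eq_q)).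
Qed.

End SeparatingSequence.

Lemma count_le1 (T : eqType) (Q : pred T) (r : seq T) :
  uniq r -> (forall x y, Q x -> Q y -> x = y) -> (count Q r <= 1)%N.
Proof.
elim: r => [//|x r IH] /= /andP[xr ur] Q1; case: (boolP (Q x)) => Qx /=; last exact: IH.
rewrite -[1%N]addn0 leq_add2l leqn0 -(negbK (_ == 0)%N) -lt0n -has_count.
by apply/hasP => -[y yr /(Q1 _ _ Qx) xy]; move: xr; rewrite xy yr.
Qed.

Lemma sum_c0_inj_le (R : realType) (G : choiceType) (f : G -> complex R) (h : nat -> G)
    (eps : R) : c0 f -> injective h -> 0 < eps ->
  exists A, forall N, \sum_(0 <= k < N) normc (f (h k)) <= N%:R * eps + A.
Proof.
move=> f_c0 h_inj eps_gt0; have [L uL LE] := c0_seq f_c0 eps_gt0.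
exists (\sum_(x <- L) normc (f x)) => N.
have split_le k : normc (f (h k)) <= eps + (h k \in L)%:R * normc (f (h k)).
  rewrite LE; have [le_eps|/ltW lt_eps] := leP eps (normc (f (h k))).
    by rewrite mul1r lerDr ltW.
  by rewrite mul0r addr0.
apply: le_trans (ler_sum _ (fun k _ => split_le k)) _.
rewrite big_split sumr_const_nat subn0 mulr_natl lerD2l /=.
rewrite -(big_map h xpredT (fun x => (x \in L)%:R * normc (f x))).
rewrite (eq_bigr (fun x => if x \in L then normc (f x) else 0)) => [|x _]; last first.
  by case: (x \in L); rewrite ?mul1r ?mul0r.
rewrite -big_mkcond -big_filter; apply: sum_le_sum_subset => [x|||x]; rewrite ?normc_ge0 //.
  by rewrite filter_uniq // map_inj_uniq ?iota_uniq.
by rewrite mem_filter => /andP[].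
Qed.

Lemma normc_le_eps_invn_eq0 (R : realType) (x : complex R) :
  (forall eps : R, 0 < eps -> exists A : R, forall N, (0 < N)%N -> normc x <= eps + A / N%:R) ->
  x = 0.
Proof.
move=> x_small; apply/eqP; rewrite -normc_eq0 eq_le normc_ge0 andbT.
apply/ler_addgt0Pr => eps eps_gt0; rewrite add0r.
have eps2_gt0 : 0 < eps / 2 by rewrite divr_gt0.
have [A xA] := x_small _ eps2_gt0; set N := (Num.bound (`|A| / (eps / 2))).+1.
have N_gt0 : (0 : R) < N%:R by rewrite ltr0n.
have lt_N : `|A| / (eps / 2) < N%:R.
  by apply: lt_trans (archi_boundP _) _; rewrite ?ltr_nat // divr_ge0 // ltW.
apply: le_trans (xA N isT) _; rewrite [leRHS]splitr lerD2l ler_pdivrMr //.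
by apply: le_trans (ler_norm A) _; rewrite mulrC -ler_pdivrMr // ltW.
Qed.

Section MatrixUnitsVanish.
Variables (R : realType) (G : choiceType) (gs : group_str G) (w : G -> R).
Variable phi : ((G -> complex R) -> (G -> complex R)) -> (G -> complex R).
Hypotheses (w_weight : is_weight gs w) (phi_hom : is_bounded_module_hom gs w phi).
Hypothesis G_infinite : forall L : seq G, exists x, x \notin L.
Variables s t : G.
Local Notation K := (complex R).
Local Notation mul := (gmul gs).
Local Notation inv := (ginv gs).
Local Notation e := (gone gs).
Local Notation h := (sep gs G_infinite).

Definition on_t_sep (u : G) : bool := `[< exists n, u = mul t (h n) >].

(* The factor Omega(t, t^-1 u)^-1 makes every rho_shift (h n) equal to 1 at t. *)
Definition rho (u : G) : K :=
  if on_t_sep u then ((Omega gs w t (mul (inv t) u))^-1)%:C else 0.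

Definition rho_shift (g b : G) : K := rho (mul b g) * (Omega gs w b g)%:C.

Definition wt : R := w t * w (inv t).

Lemma wt_ge0 : 0 <= wt.
Proof. by rewrite mulr_ge0 // ltW // (weight_gt0 w_weight). Qed.

Lemma normc_rho_le u : normc (rho u) <= (on_t_sep u)%:R * wt.
Proof.
rewrite /rho; case: (on_t_sep u); last by rewrite normc0 mul0r.
rewrite mul1r normcR ger0_norm; last by rewrite invr_ge0 ltW // (Omega_gt0 w_weight).
rewrite /Omega invf_div gmulKVg ler_pdivrMr ?(weight_gt0 w_weight) // /wt -mulrA.
by case: w_weight => w_gt0 w_submul _; apply: ler_wpM2l; [exact/ltW | exact: w_submul].
Qed.

Lemma bounded_coef_rho : bounded_coef rho.
Proof.
exists wt => [|u]; first exact: wt_ge0.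
by apply: le_trans (normc_rho_le u) _; case: (on_t_sep u); rewrite ?mul1r ?mul0r ?wt_ge0.
Qed.

Lemma normc_rho_shift_le g b : normc (rho_shift g b) <= normc (rho (mul b g)).
Proof.
rewrite normcM normcR ger0_norm; last exact/ltW/(Omega_gt0 w_weight).
exact: ler_piMr (normc_ge0 _) (Omega_le1 w_weight _ _).
Qed.

Lemma bounded_coef_rho_shift g : bounded_coef (rho_shift g).
Proof.
have [B B_ge0 rhoB] := bounded_coef_rho.
by exists B => // b; apply: le_trans (normc_rho_shift_le g b) (rhoB _).
Qed.

Lemma rho_shift_t k : rho_shift (h k) t = 1.
Proof.
rewrite /rho_shift /rho /on_t_sep gmulKg; case: asboolP => [_|[]]; last by exists k.
by rewrite -rmorphM mulVf ?gt_eqF ?(Omega_gt0 w_weight).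
Qed.

(* b h_k = t h_n forces h_n h_k^-1 = t^-1 b, so max(n, k) is fixed by sep_quotient_max:
   either k is that maximum, or n is and then k is determined by b h_k = t h_n. *)
Lemma count_on_t_sep N b : b != t -> (count (fun k => on_t_sep (mul b (h k))) (iota 0 N) <= 2)%N.
Proof.
move=> bt; set P := fun k => _.
have quotient k n : mul b (h k) = mul t (h n) ->
    mul (h n) (inv (h k)) = mul (inv t) b /\ n != k.
  move=> bk; have tbk : mul (mul (inv t) b) (h k) = h n by rewrite -gmulA bk gmulKg.
  split; first by rewrite -tbk gmulgK.
  apply: contraNneq bt => nk; apply/eqP; move: tbk; rewrite nk -{2}(gmul1 gs (h k)).
  by move/gmulIr => tb; rewrite -(gmulKVg gs t b) tb gmulx1.
have [[k0 [n0 kn0]]|none] := pselect (exists k0 n0, mul b (h k0) = mul t (h n0)); last first.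
  rewrite (@eq_count _ _ pred0) ?count_pred0 // => k /=.
  by apply/negbTE/asboolPn => -[n kn]; apply: none; exists k, n.
have [q0 nk0] := quotient _ _ kn0; pose p := maxn n0 k0.
have P_sub k : P k -> (k == p) || (mul b (h k) == mul t (h p)).
  move=> /asboolP[n kn]; have [qk nk] := quotient _ _ kn.
  have := sep_quotient_max nk nk0 (etrans qk (esym q0)); rewrite -/p.
  case: (leqP n k) => [_ ->|_ <-]; first by rewrite eqxx.
  by rewrite kn eqxx orbT.
apply: leq_trans (sub_count P_sub _) _.
apply: leq_trans (_ : _ <= count (pred1 p) (iota 0 N) +
                     count (fun k => mul b (h k) == mul t (h p)) (iota 0 N))%N _.
  by rewrite -count_predUI leq_addr.
rewrite -[2%N]/(1 + 1)%N.
apply: leq_add; apply: count_le1 (iota_uniq 0 N) _ => x y; first by move=> /eqP-> /eqP->.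
by move=> /eqP bx /eqP by_; apply/(sep_inj (gs := gs))/(@gmulI _ gs b); rewrite bx by_.
Qed.

Lemma sum_rho_shift_le N b : b != t ->
  \sum_(0 <= k < N) normc (rho_shift (h k) b) <= 2 * wt.
Proof.
move=> bt; apply: le_trans (ler_sum _ (fun k _ => normc_rho_shift_le (h k) b)) _.
apply: le_trans (ler_sum _ (fun k _ => normc_rho_le (mul b (h k)))) _.
rewrite -mulr_suml; apply: ler_wpM2r; first exact: wt_ge0.
rewrite (_ : \sum_(0 <= k < N) _ = (count (fun k => on_t_sep (mul b (h k))) (iota 0 N))%:R).
  by rewrite ler_nat count_on_t_sep.
rewrite /index_iota subn0 -sum1_count natr_sum [RHS]big_mkcond.
by apply: eq_bigr => k _; case: on_t_sep.
Qed.

Local Notation rho_row := (row_op s rho).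

Definition avg_defect (N : nat) : G -> K :=
  (fun u => \sum_(0 <= k < N) N%:R^-1 * rho_shift (h k) u) \+ (fun u => -1 * delta R t u).

Lemma normc_invn (N : nat) : normc (N%:R^-1 : K) = N%:R^-1.
Proof. by rewrite normcV -[N%:R]/(1 *+ N) normcMn normc1. Qed.

Lemma avg_bound_ge0 (N : nat) : 0 <= N%:R^-1 * (2 * wt).
Proof. by rewrite mulr_ge0 ?invr_ge0 // mulr_ge0 ?wt_ge0. Qed.

Lemma avg_defect_bounded N : (0 < N)%N -> bounded_fun (avg_defect N) (N%:R^-1 * (2 * wt)).
Proof.
move=> N_gt0 b; rewrite /avg_defect /= -mulr_sumr.
have N_neq0 : N%:R != 0 :> K by rewrite pnatr_eq0 -lt0n.
have [->|bt] := eqVneq b t.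
  under eq_bigr do rewrite rho_shift_t.
  rewrite sumr_const_nat subn0 -mulr_natr mul1r mulVf // /delta eqxx mulr1 subrr normc0.
  exact: avg_bound_ge0.
rewrite /delta (negbTE bt) mulr0 addr0 normcM normc_invn.
apply: ler_wpM2l; first by rewrite invr_ge0.
exact: le_trans (normc_sum _ _) (sum_rho_shift_le N bt).
Qed.

Lemma phi_matrix_unit_avg N :
  phi (matrix_unit s t) e =
  \sum_(0 <= k < N) N%:R^-1 * phi rho_row (h k) - phi (row_op s (avg_defect N)) e.
Proof.
have avg_coef : bounded_coef (fun u => \sum_(0 <= k < N) N%:R^-1 * rho_shift (h k) u).
  by apply: bounded_coef_sum => k; apply: bounded_coef_rho_shift.
have delta_coef : bounded_coef (fun u => -1 * delta R t u).
  by apply: bounded_coefZ; apply: bounded_coef_delta.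
rewrite /avg_defect (phi_row_opD phi_hom s avg_coef delta_coef) /=.
rewrite (phi_row_op_sum phi_hom s _ _ (fun k => bounded_coef_rho_shift (h k))).
rewrite (phi_row_opZ phi_hom s _ (bounded_coef_delta R t)).
under [X in _ = X - _]eq_bigr do rewrite -(phi_row_op_shift phi_hom s w_weight _ bounded_coef_rho).
by rewrite opprD addrA subrr add0r mulN1r opprK.
Qed.

Lemma phi_matrix_unit_e : phi (matrix_unit s t) e = 0.
Proof.
have [C _ phiC] := phi_bound phi_hom.
have rho_row_bounded := bounded_op_row_op_coef s bounded_coef_rho.
apply: normc_le_eps_invn_eq0 => eps eps_gt0.
have [A rho_row_le] := sum_c0_inj_le (phi_c0 phi_hom rho_row_bounded) (@sep_inj G gs G_infinite) eps_gt0.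
exists (A + C * (2 * wt)) => N N_gt0; rewrite (phi_matrix_unit_avg N).
have N_gt0R : (0 : R) < N%:R by rewrite ltr0n.
have defect_le : normc (phi (row_op s (avg_defect N)) e) <= C * (N%:R^-1 * (2 * wt)).
  have B_ge0 := avg_bound_ge0 N.
  have defect_bounded := avg_defect_bounded N_gt0.
  by apply: phiC; [exact: bounded_op_row_op defect_bounded | | exact: op_bound_row_op].
have avg_le : normc (\sum_(0 <= k < N) N%:R^-1 * phi rho_row (h k)) <= N%:R^-1 * (N%:R * eps + A).
  rewrite -mulr_sumr normcM normc_invn; apply: ler_wpM2l; first by rewrite invr_ge0 ltW.
  exact: le_trans (normc_sum _ _) (rho_row_le N).
apply: le_trans (normcD _ _) _; rewrite normcN.
suff -> : eps + (A + C * (2 * wt)) / N%:R =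
    N%:R^-1 * (N%:R * eps + A) + C * (N%:R^-1 * (2 * wt)) by exact: lerD.
by field; rewrite pnatr_eq0 -lt0n.
Qed.

End MatrixUnitsVanish.

Lemma phi_matrix_trunc (R : realType) (G : choiceType) (gs : group_str G) (w : G -> R)
    (phi : ((G -> complex R) -> (G -> complex R)) -> (G -> complex R)) :
  is_weight gs w -> is_bounded_module_hom gs w phi ->
  (forall L : seq G, exists x, x \notin L) ->
  forall T L, phi (matrix_trunc T L) (gone gs) = 0.
Proof.
move=> w_weight phi_hom G_infinite T L.
rewrite /matrix_trunc (phi_sum phi_hom) => [|p]; last exact: bounded_op_matrix_unit.
by rewrite big1 // => p _; rewrite (phi_matrix_unit_e w_weight phi_hom G_infinite) mulr0.
Qed.

Local Close Scope complex_scope.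

Theorem mainTheorem6 (R : realType) (G : choiceType) (gs : group_str G)
    (w : G -> R) (phi : ((G -> complex R) -> (G -> complex R)) -> (G -> complex R)) :
  is_weight gs w ->
  ~ strongly_non_amenable gs w ->
  is_bounded_module_hom gs w phi ->
  let M := fun T => pair (phi T) (delta R (gone gs)) in
  forall T : (G -> complex R) -> (G -> complex R),
    is_bounded_op T -> c0 (op_matrix T) -> M T = 0.
Proof.
move=> w_weight not_sna phi_hom M T Tb Tc0; rewrite /M pair_delta.
have G_infinite := not_strongly_non_amenable_infinite not_sna.
have [C C_ge0 phiC] := phi_bound phi_hom.
apply: normc_le_eps_invn_eq0 => eps eps_gt0; exists 0 => N _; rewrite mul0r addr0.
have epsC_gt0 : 0 < eps / (C + 1) by rewrite divr_gt0 // ltr_wpDl.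
have [L uL LE] := c0_seq Tc0 epsC_gt0.
have Tr := bounded_op_matrix_trunc T L.
have Ub := bounded_opD Tb (bounded_opZ (-1) Tr).
have U_small := op_bound_matrix_residual Tb uL (ltW epsC_gt0).
have -> : phi T (gone gs) = phi (fun a => T a \+ (fun g => -1 * matrix_trunc T L a g)) (gone gs).
  rewrite (phiD phi_hom Tb (bounded_opZ (-1) Tr)) (phiZ phi_hom (-1) Tr) /=.
  by rewrite (phi_matrix_trunc w_weight phi_hom G_infinite) mulr0 addr0.
apply: le_trans (phiC _ _ Ub (ltW epsC_gt0) (U_small _) _) _.
  by move=> p; rewrite LE -ltNge => /ltW.
by rewrite mulrA ler_pdivrMr ?ltr_wpDl // mulrDr mulr1 mulrC lerDl ltW.
Qed.
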